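(* Let $A$ be a locally-complex Cayley--Dickson algebra and let $f(x)=x^n+a_{n-1}x^{n-1}+\dots+a_0\in A[x]$ be monic with $n\ge1$. Then $\mathrm{sn}(f)$ is a compact subset of $A$, and it is contained in the open ball centered at $0$ of radius $R_1(f)$, in the open ball centered at $0$ of radius $R_2(f)$, and in the closed ball centered at $0$ of radius $R_3(f)$, where $R_1(f)=\sqrt{1+\sum_{k=0}^{n-1}|a_k|^2}$, $R_2(f)=1+\max_{0\le k\le n-1}|a_k|$, $R_3(f)=\max\{1,\sum_{k=0}^{n-1}|a_k|\}$.
   Context: Real Cayley--Dickson algebras: $A_0=\mathbb{R}$ with identity involution, $A_{k+1}=A_k\{\gamma_k\}=A_k\times A_k$ with product $(a,b)(c,d)=(ac+\gamma_k\bar d b,\ da+b\bar c)$ and involution $\overline{(a,b)}=(\bar a,-b)$. A real unital algebra is locally-complex if every non-real element generates a subalgebra isomorphic to $\mathbb{C}$ (for Cayley--Dickson algebras: all $\gamma_k=-1$ up to isomorphism). Trace $\mathrm{tr}(\lambda)=\lambda+\bar\lambda$, norm $\mathrm{n}(\lambda)=\bar\lambda\lambda$, $|\lambda|=\sqrt{\mathrm{n}(\lambda)}$ (Euclidean norm; $A$ carries the Euclidean topology). For $I$ with trace $0$ and norm $1$, $\mathbb{C}_I=\mathbb{R}+\mathbb{R}I\cong\mathbb{C}$ and $\pi_I$ the orthogonal projection onto it. $A[x]=A\otimes_{\mathbb{R}}\mathbb{R}[x]$ with central $x$; for $f(x)=\sum_k a_kx^k$, $f_I(x)=\sum_k\pi_I(a_k)x^k$.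 If $f_I$ is non-constant, $K_{\mathbb{C}_I}(f_I)$ is the convex hull in $\mathbb{C}_I$ of the roots of $f_I$ in $\mathbb{C}_I$; otherwise $K_{\mathbb{C}_I}(f_I)=\mathbb{C}_I$. The Gauss--Lucas snail is $\mathrm{sn}(f)=\bigcup_I K_{\mathbb{C}_I}(f_I)$ over all $I$ with $\mathrm{tr}(I)=0$, $\mathrm{n}(I)=1$. *)

From Stdlib Require Import Reals List.
Open Scope R_scope.

(** * Real Cayley--Dickson algebras A_k with all gamma_j = -1
    (the locally-complex ones, up to isomorphism).
    A_0 = R, A_{k+1} = A_k x A_k,
    (a,b)(c,d) = (ac + gamma conj(d) b, da + b conj(c)) with gamma = -1,
    conj(a,b) = (conj(a), -b). *)

Fixpoint CD (k : nat) : Type :=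
  match k with O => R | S k' => (CD k' * CD k')%type end.

Fixpoint cd_zero (k : nat) : CD k :=
  match k return CD k with O => 0 | S k' => (cd_zero k', cd_zero k') end.

Fixpoint cd_real (k : nat) (r : R) : CD k :=
  match k return CD k with O => r | S k' => (cd_real k' r, cd_zero k') end.

Fixpoint cd_add (k : nat) : CD k -> CD k -> CD k :=
  match k return CD k -> CD k -> CD k with
  | O => Rplus
  | S k' => fun x y => (cd_add k' (fst x) (fst y), cd_add k' (snd x) (snd y))
  end.

Fixpoint cd_opp (k : nat) : CD k -> CD k :=
  match k return CD k -> CD k with
  | O => Ropp
  | S k' => fun x => (cd_opp k' (fst x), cd_opp k' (snd x))
  end.

Definition cd_sub (k : nat) (x y : CD k) : CD k := cd_add k x (cd_opp k y).

Fixpoint cd_conj (k : nat) : CD k -> CD k :=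
  match k return CD k -> CD k with
  | O => fun x => x
  | S k' => fun x => (cd_conj k' (fst x), cd_opp k' (snd x))
  end.

Fixpoint cd_scal (k : nat) (r : R) : CD k -> CD k :=
  match k return CD k -> CD k with
  | O => fun x => r * x
  | S k' => fun x => (cd_scal k' r (fst x), cd_scal k' r (snd x))
  end.

Fixpoint cd_mul (k : nat) : CD k -> CD k -> CD k :=
  match k return CD k -> CD k -> CD k with
  | O => Rmult
  | S k' => fun x y =>
      (cd_add k' (cd_mul k' (fst x) (fst y))
                 (cd_opp k' (cd_mul k' (cd_conj k' (snd y)) (snd x))),
       cd_add k' (cd_mul k' (snd y) (fst x))
                 (cd_mul k' (snd x) (cd_conj k' (fst y))))
  end.

Fixpoint cd_re (k : nat) : CD k -> R :=
  match k return CD k -> R with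
  | O => fun x => x
  | S k' => fun x => cd_re k' (fst x)
  end.

Definition cd_tr (k : nat) (x : CD k) : CD k := cd_add k x (cd_conj k x).
Definition cd_n (k : nat) (x : CD k) : CD k := cd_mul k (cd_conj k x) x.

(** |x| = sqrt(n(x)) (n(x) is real, we take its real part) *)
Definition cd_abs (k : nat) (x : CD k) : R := sqrt (cd_re k (cd_n k x)).

(** Euclidean inner product: the polarization of the quadratic form n *)
Definition cd_dot (k : nat) (x y : CD k) : R :=
  (cd_re k (cd_n k (cd_add k x y)) - cd_re k (cd_n k x) - cd_re k (cd_n k y)) / 2.

Fixpoint cd_pow (k : nat) (x : CD k) (m : nat) : CD k :=
  match m with O => cd_real k 1 | S m' => cd_mul k (cd_pow k x m') x end.

Definition imag_unit (k : nat) (I : CD k) : Prop :=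
  cd_tr k I = cd_zero k /\ cd_n k I = cd_real k 1.

Definition in_CI (k : nat) (I z : CD k) : Prop :=
  exists al be : R, z = cd_add k (cd_real k al) (cd_scal k be I).

(** orthogonal projection onto C_I; for an imaginary unit I, {1, I} is an
    orthonormal basis of C_I, so pi_I(a) = <a,1> 1 + <a,I> I *)
Definition pi_I (k : nat) (I a : CD k) : CD k :=
  cd_add k (cd_real k (cd_dot k a (cd_real k 1))) (cd_scal k (cd_dot k a I) I).

(** Polynomials in A[x] are represented by coefficient lists
    c = [c_0; c_1; ...; c_d], f(x) = sum_i c_i x^i (x central). *)

Fixpoint eval_fI_from (k : nat) (I : CD k) (c : list (CD k)) (z : CD k) (i : nat)
  : CD k :=
  match c with
  | nil => cd_zero k
  | a :: c' => cd_add k (cd_mul k (pi_I k I a) (cd_pow k z i))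
                        (eval_fI_from k I c' z (S i))
  end.

Definition eval_fI (k : nat) (I : CD k) (c : list (CD k)) (z : CD k) : CD k :=
  eval_fI_from k I c z 0.

Definition fI_nonconstant (k : nat) (I : CD k) (c : list (CD k)) : Prop :=
  exists i : nat, (1 <= i)%nat /\ (i < length c)%nat /\
    pi_I k I (nth i c (cd_zero k)) <> cd_zero k.

Definition conv_hull (k : nat) (S : CD k -> Prop) (x : CD k) : Prop :=
  exists l : list (R * CD k),
    Forall (fun p => 0 <= fst p /\ S (snd p)) l /\
    fold_right Rplus 0 (map fst l) = 1 /\
    x = fold_right (fun p acc => cd_add k (cd_scal k (fst p) (snd p)) acc)
                   (cd_zero k) l.

Definition K_I (k : nat) (I : CD k) (c : list (CD k)) (x : CD k) : Prop :=
  (fI_nonconstant k I c /\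
     conv_hull k (fun z => in_CI k I z /\ eval_fI k I c z = cd_zero k) x)
  \/ (~ fI_nonconstant k I c /\ in_CI k I x).

Definition snail (k : nat) (c : list (CD k)) (x : CD k) : Prop :=
  exists I : CD k, imag_unit k I /\ K_I k I c x.

Definition cd_open (k : nat) (U : CD k -> Prop) : Prop :=
  forall x, U x -> exists e, 0 < e /\
    forall y, cd_abs k (cd_sub k y x) < e -> U y.

Definition cd_compact (k : nat) (S : CD k -> Prop) : Prop :=
  forall (J : Type) (U : J -> CD k -> Prop),
    (forall j, cd_open k (U j)) ->
    (forall x, S x -> exists j, U j x) ->
    exists l : list J, forall x, S x -> exists j, In j l /\ U j x.

Definition monic_poly (k n : nat) (a : nat -> CD k) : list (CD k) :=
  map a (seq 0 n) ++ (cd_real k 1 :: nil).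

Definition radius1 (k n : nat) (a : nat -> CD k) : R :=
  sqrt (1 + fold_right Rplus 0 (map (fun j => (cd_abs k (a j))^2) (seq 0 n))).

Definition radius2 (k n : nat) (a : nat -> CD k) : R :=
  1 + fold_right Rmax 0 (map (fun j => cd_abs k (a j)) (seq 0 n)).

Definition radius3 (k n : nat) (a : nat -> CD k) : R :=
  Rmax 1 (fold_right Rplus 0 (map (fun j => cd_abs k (a j)) (seq 0 n))).

(* Fix an imaginary unit I.  The map w |-> Re w + (Im w) I is an isomorphism
   of real algebras from the complex numbers onto C_I, and it turns the
   restriction of f_I to C_I into the monic complex polynomial
   w^n + sum_j c_j w^j, where c_j is the orthogonal projection of a_j onto C_I,
   so that |c_j| <= |a_j|.  Every root w therefore satisfies
   |w|^n <= sum_j |a_j| |w|^j, and three classical estimates for such numbers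
   give |w| < R_1, |w| < R_2 and |w| <= R_3; the bounds pass to convex
   combinations of roots.
   For compactness: the complex polynomial has exactly n roots counted with
   multiplicity, so every point of sn(f) is a convex combination
   sum_j mu_j w_j of n roots for some I.  The tuples (I, mu, w) satisfying the
   corresponding polynomial constraints form a closed bounded subset of a
   Euclidean space, and sn(f) is its continuous image. *)

From Stdlib Require Import Reals List.
From mathcomp Require Import ssreflect ssrbool.
From mathcomp Require all_boot all_order all_algebra all_classical all_reals all_analysis.
From mathcomp Require Rstruct Rstruct_topology complex ring lra.

Module CayleyDicksonSnail.

Import all_boot all_order all_algebra all_classical all_reals all_analysis.
Import Rstruct Rstruct_topology complex ring lra.
Import Order.TTheory GRing.Theory Num.Theory.
Import numFieldNormedType.Exports ComplexField.Normc.

Set Implicit Arguments.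
Unset Strict Implicit.
Unset Printing Implicit Defensive.

Local Open Scope ring_scope.
Local Open Scope complex_scope.
Local Open Scope classical_set_scope.

Local Notation Re := (@complex.Re R).
Local Notation Im := (@complex.Im R).

Lemma In_mem (T : eqType) (x : T) (s : seq T) : List.In x s <-> x \in s.
Proof.
elim: s => [|y s IH] //=; rewrite in_cons; split.
- by case=> [->|/IH->]; rewrite ?eqxx ?orbT.
- by case/orP=> [/eqP->|/IH]; [left | right].
Qed.

Lemma foldr_map_seq (T : Type) (op : T -> T -> T) (idx : T) (f : nat -> T) (s m : nat) :
  fold_right op idx (List.map f (List.seq s m)) = \big[op/idx]_(s <= j < s + m) f j.
Proof.
elim: m s => [|m IH] s /=; first by rewrite addn0 big_geq.
by rewrite IH [RHS]big_ltn ?addSnnS // addnS ltnS leq_addr.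
Qed.

Lemma foldr_Rplus_map (T : Type) (f : T -> R) (s : seq T) :
  fold_right Rplus 0%coqR (List.map f s) = \sum_(x <- s) f x.
Proof. by elim: s => [|x s IH] /=; rewrite ?big_nil ?big_cons ?IH. Qed.

Lemma sum_by_index (V : zmodType) (T K : eqType) (x0 : K) (key : T -> K) (rs : seq K)
    (l : seq T) (F : T -> K -> V) :
  {in l, forall q, key q \in rs} ->
  \sum_(j < size rs) \sum_(q <- l | j == index (key q) rs :> nat) F q (nth x0 rs j) =
  \sum_(q <- l) F q (key q).
Proof.
move=> l_rs; rewrite (exchange_big_dep xpredT) //= !big_seq; apply: eq_bigr => q lq.
rewrite (big_ord1_eq _ (fun j => F q (nth x0 rs j))) index_mem l_rs //.
by rewrite nth_index ?l_rs.
Qed.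

Lemma monic_closed_roots (F : closedFieldType) (p : {poly F}) :
  p \is monic -> exists2 rs : seq F, size rs = (size p).-1 & forall z, root p z = (z \in rs).
Proof.
move=> /monicP p_monic; have [rs def_p] := closed_field_poly_normal p.
rewrite p_monic scale1r in def_p.
by exists rs => [|z]; rewrite def_p ?size_prod_XsubC ?root_prod_XsubC.
Qed.

Lemma row_mx_all (T : Type) m1 m2 (A : 'rV[T]_m1) (B : 'rV[T]_m2) (Q : T -> Prop) :
  (forall i, Q (A ord0 i)) -> (forall i, Q (B ord0 i)) -> forall i, Q (row_mx A B ord0 i).
Proof.
move=> QA QB i; rewrite -(fintype.splitK i).
by case: (fintype.split i) => j; rewrite ?row_mxEl ?row_mxEr.
Qed.

Lemma normc_ge0 (w : R[i]) : 0 <= normc w.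
Proof. by case: w => a b; exact: sqrtr_ge0. Qed.

Lemma normc_real (r : R) : normc r%:C = `|r|.
Proof. by rewrite /= expr0n addr0 sqrtr_sqr. Qed.

Lemma normcX (w : R[i]) m : normc (w ^+ m) = normc w ^+ m.
Proof. by elim: m => [|m IH]; rewrite ?normc1 // !exprS normcM IH. Qed.

Lemma norm_Re_le_normc (w : R[i]) : `|Re w| <= normc w.
Proof. by case: w => a b /=; rewrite -sqrtr_sqr ler_sqrt ?lerDl ?addr_ge0 ?sqr_ge0. Qed.

Lemma norm_Im_le_normc (w : R[i]) : `|Im w| <= normc w.
Proof. by case: w => a b /=; rewrite -sqrtr_sqr ler_sqrt ?lerDr ?addr_ge0 ?sqr_ge0. Qed.

Lemma normc_sum (T : Type) (s : seq T) (P : pred T) (F : T -> R[i]) :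
  normc (\sum_(i <- s | P i) F i) <= \sum_(i <- s | P i) normc (F i).
Proof.
elim/big_rec2: _ => [|i y1 y2 _ IH]; first by rewrite normc0.
by apply: le_trans (le_normcD _ _) _; rewrite lerD2l.
Qed.

Lemma normc_convex_comb (l : seq (R * R[i])) :
  (forall q, q \in l -> 0 <= q.1) ->
  normc (\sum_(q <- l) q.1%:C * q.2) <= \sum_(q <- l) q.1 * normc q.2.
Proof.
move=> l_ge0; apply: le_trans; first exact: normc_sum.
by rewrite !big_seq; apply: ler_sum => q lq; rewrite normcM normc_real ger0_norm ?l_ge0.
Qed.

(** * Convex combinations and dominated numbers *)

Section ConvexCombination.
Variables (F : realFieldType) (T : eqType) (l : seq T) (lam x : T -> F) (B : F).
Hypotheses (lam_ge0 : forall q, q \in l -> 0 <= lam q) (lam_sum1 : \sum_(q <- l) lam q = 1).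

Lemma convex_comb_le : (forall q, q \in l -> x q <= B) -> \sum_(q <- l) lam q * x q <= B.
Proof.
move=> xB; rewrite -[leRHS]mul1r -lam_sum1 big_distrl /= !big_seq.
by apply: ler_sum => q lq; rewrite ler_wpM2l ?lam_ge0 ?xB.
Qed.

Lemma convex_comb_lt : (forall q, q \in l -> x q < B) -> \sum_(q <- l) lam q * x q < B.
Proof.
move=> xB; rewrite -subr_gt0 -[X in X - _]mul1r -lam_sum1 big_distrl -sumrB /=.
have terms_ge0 q : q \in l -> 0 <= lam q * B - lam q * x q.
  by move=> lq; rewrite -mulrBr mulr_ge0 ?lam_ge0 // subr_ge0 ltW ?xB.
rewrite lt_def big_seq sumr_ge0 // andbT psumr_neq0 //.
have := oner_neq0 F; rewrite -lam_sum1 big_seq psumr_neq0 // => /hasP[q lq /andP[_ lam_gt0]].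
by apply/hasP; exists q; rewrite // lq -mulrBr mulr_gt0 // subr_gt0 xB.
Qed.

End ConvexCombination.

Lemma cauchy_schwarz_sum (F : realDomainType) m (x y : nat -> F) :
  (\sum_(j < m) x j * y j) ^+ 2 <= (\sum_(j < m) x j ^+ 2) * (\sum_(j < m) y j ^+ 2).
Proof.
elim: m => [|m IH]; first by rewrite !big_ord0 expr0n /= mulr0.
rewrite !big_ord_recr /=.
set S := \sum_(i < m) _ in IH *; set X := \sum_(i < m) _ in IH *.
set Y := \sum_(i < m) _ in IH *; set u := x m; set v := y m.
have X_ge0 : 0 <= X by apply: sumr_ge0 => i _; exact: sqr_ge0.
have Y_ge0 : 0 <= Y by apply: sumr_ge0 => i _; exact: sqr_ge0.
suff : 2 * S * u * v <= X * v ^+ 2 + u ^+ 2 * Y by nra.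
have cross_ge0 : 0 <= X * v ^+ 2 + u ^+ 2 * Y.
  by apply: addr_ge0; apply: mulr_ge0; rewrite ?sqr_ge0.
have [uv_le0 | uv_gt0] := lerP (2 * S * u * v) 0; first exact: le_trans uv_le0 cross_ge0.
rewrite -(ler_pXn2r (n := 2)) ?nnegrE ?(ltW uv_gt0) //.
have : S ^+ 2 * (u ^+ 2 * v ^+ 2) <= X * Y * (u ^+ 2 * v ^+ 2).
  by rewrite ler_wpM2r // mulr_ge0 ?sqr_ge0.
have := sqr_ge0 (X * v ^+ 2 - u ^+ 2 * Y); nra.
Qed.

Section DominatedRootBounds.
Variables (F : realFieldType) (m : nat) (A : nat -> F) (r : F).
Hypotheses (A_ge0 : forall j, 0 <= A j) (r_ge0 : 0 <= r).
Hypothesis dominated : r ^+ m <= \sum_(j < m) A j * r ^+ j.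

Lemma dominated_degree_gt0 : (0 < m)%N.
Proof. by move: dominated; case: m => //; rewrite big_ord0 expr0 ler10. Qed.

Lemma dominated_le_max1_sum : r <= Num.max 1 (\sum_(j < m) A j).
Proof.
rewrite leNgt gt_max; apply/negP => /andP[r_gt1 r_gt_sum].
have r_pred_gt0 : 0 < r ^+ m.-1 by rewrite exprn_gt0 // (lt_trans ltr01).
have : \sum_(j < m) A j * r ^+ j <= (\sum_(j < m) A j) * r ^+ m.-1.
  rewrite big_distrl /=; apply: ler_sum => j _; rewrite ler_wpM2l //.
  by rewrite ler_weXn2l ?ltW // -ltnS prednK ?dominated_degree_gt0.
have : r ^+ m = r * r ^+ m.-1 by rewrite -exprS prednK ?dominated_degree_gt0.
move: dominated; nra.
Qed.

Lemma dominated_lt_1_add_max : r < 1 + \big[Num.max/0]_(j < m) A j.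
Proof.
rewrite ltNge; apply/negP; set M := \big[Num.max/0]_(j < m) A j => r_ge.
have geom_ge0 : 0 <= \sum_(j < m) r ^+ j by apply: sumr_ge0 => j _; exact: exprn_ge0.
have : \sum_(j < m) A j * r ^+ j <= M * \sum_(j < m) r ^+ j.
  rewrite big_distrr; apply: ler_sum => j _; rewrite ler_wpM2r ?exprn_ge0 //.
  exact: le_bigmax.
have : M * \sum_(j < m) r ^+ j <= (r - 1) * \sum_(j < m) r ^+ j.
  by rewrite ler_wpM2r // lerBrDl.
rewrite -subrX1; move: dominated; lra.
Qed.

Lemma dominated_sqr_lt_1_add_sum_sqr : r ^+ 2 < 1 + \sum_(j < m) A j ^+ 2.
Proof.
have CS := cauchy_schwarz_sum m A (fun j => r ^+ j).
have geom := subrX1 (r ^+ 2) m.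
rewrite -exprM mulnC exprM in geom.
have sqr_geom : \sum_(j < m) (r ^+ j) ^+ 2 = \sum_(j < m) (r ^+ 2) ^+ j.
  by apply: eq_bigr => j _; rewrite -!exprM mulnC.
rewrite sqr_geom in CS.
set Q := \sum_(j < m) A j ^+ 2 in CS *; set G := \sum_(j < m) (r ^+ 2) ^+ j in CS geom.
have G_ge0 : 0 <= G by apply: sumr_ge0 => j _; exact/exprn_ge0/sqr_ge0.
rewrite ltNge; apply/negP => r_ge.
have : Q * G <= (r ^+ 2 - 1) * G by rewrite ler_wpM2r // lerBrDl.
have := exprn_ge0 m r_ge0; move: dominated; nra.
Qed.

End DominatedRootBounds.

Section RealContinuity.
Variable T : topologicalType.
Implicit Types f g : T -> R.

Lemma continuousR_D f g : continuous f -> continuous g -> continuous (fun p => f p + g p).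
Proof. by move=> cf cg p; apply: (@continuousD R R^o); [exact: cf | exact: cg]. Qed.

Lemma continuousR_N f : continuous f -> continuous (fun p => - f p).
Proof. by move=> cf p; apply: (@continuousN R R^o); exact: cf. Qed.

Lemma continuousR_M f g : continuous f -> continuous g -> continuous (fun p => f p * g p).
Proof. by move=> cf cg p; apply: (@continuousM R T); [exact: cf | exact: cg]. Qed.

Lemma continuousR_sum m (F : 'I_m -> T -> R) :
  (forall j, continuous (F j)) -> continuous (fun p => \sum_(j < m) F j p).
Proof.
elim: m F => [|m IH] F cF.
  by under eq_fun do rewrite big_ord0; exact: cst_continuous.
under eq_fun do rewrite big_ord_recr /=.
by apply: continuousR_D; [apply: IH => j | exact: cF].
Qed.

Lemma closed_continuous_eq f c : continuous f -> closed [set p | f p = c].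
Proof. by move=> cf; exact: (continuous_closedP f).1 cf _ (@closed_eq R c). Qed.

Lemma closed_continuous_ge f c : continuous f -> closed [set p | c <= f p].
Proof. by move=> cf; exact: (continuous_closedP f).1 cf _ (@closed_ge R c). Qed.

Lemma closed_forall (J : Type) (A : J -> set T) :
  (forall j, closed (A j)) -> closed [set p | forall j, A j p].
Proof.
move=> cA; have -> : [set p | forall j, A j p] = \bigcap_(j in setT) A j.
  by apply/seteqP; split=> p Ap j //; exact: Ap.
exact: closed_bigI.
Qed.

Definition continuousC (f : T -> R[i]) :=
  continuous (fun p => Re (f p)) /\ continuous (fun p => Im (f p)).

Lemma continuousC_cst c : continuousC (fun=> c).
Proof. by split; exact: cst_continuous. Qed.

Lemma continuousC_real f : continuous f -> continuousC (fun p => (f p)%:C).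
Proof. by move=> cf; split=> //; exact: cst_continuous. Qed.

Lemma continuousC_D (f g : T -> R[i]) :
  continuousC f -> continuousC g -> continuousC (fun p => f p + g p).
Proof.
move=> [cf1 cf2] [cg1 cg2]; split.
- have -> : (fun p => Re (f p + g p)) = (fun p => Re (f p) + Re (g p)).
    by apply/funext => p; case: (f p); case: (g p).
  exact: continuousR_D.
- have -> : (fun p => Im (f p + g p)) = (fun p => Im (f p) + Im (g p)).
    by apply/funext => p; case: (f p); case: (g p).
  exact: continuousR_D.
Qed.

Lemma continuousC_M (f g : T -> R[i]) :
  continuousC f -> continuousC g -> continuousC (fun p => f p * g p).
Proof.
move=> [cf1 cf2] [cg1 cg2]; split.
- have -> : (fun p => Re (f p * g p)) = (fun p => Re (f p) * Re (g p) + - (Im (f p) * Im (g p))).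
    by apply/funext => p; case: (f p); case: (g p).
  by apply: continuousR_D; [|apply: continuousR_N]; apply: continuousR_M.
- have -> : (fun p => Im (f p * g p)) = (fun p => Re (f p) * Im (g p) + Im (f p) * Re (g p)).
    by apply/funext => p; case: (f p); case: (g p).
  by apply: continuousR_D; apply: continuousR_M.
Qed.

Lemma continuousC_sum m (F : 'I_m -> T -> R[i]) :
  (forall j, continuousC (F j)) -> continuousC (fun p => \sum_(j < m) F j p).
Proof.
elim: m F => [|m IH] F cF.
  by under eq_fun do rewrite big_ord0; exact: continuousC_cst.
under eq_fun do rewrite big_ord_recr /=.
by apply: continuousC_D; [apply: IH => j | exact: cF].
Qed.

Lemma continuousC_X (f : T -> R[i]) m : continuousC f -> continuousC (fun p => f p ^+ m).
Proof.
move=> cf; elim: m => [|m IH]; first by under eq_fun do rewrite expr0; exact: continuousC_cst.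
by under eq_fun do rewrite exprSr; exact: continuousC_M.
Qed.

End RealContinuity.

(* Arguments of type [R] are parsed in Stdlib's [R_scope], which is bound to
   [R]; ring operations in such positions are therefore marked [%R]. *)
Implicit Types (k : nat) (r s : R).

Lemma cd_addC k : commutative (cd_add k).
Proof. by elim: k => [|k' IH] x y /=; [exact: addrC | congr (_, _)]. Qed.

Lemma cd_addA k : associative (cd_add k).
Proof. by elim: k => [|k' IH] x y z /=; [exact: addrA | congr (_, _)]. Qed.

Lemma cd_addACA k : interchange (cd_add k) (cd_add k).
Proof. by move=> x y z t; rewrite !cd_addA; congr cd_add; rewrite -!cd_addA (cd_addC y). Qed.

Lemma cd_add0r k : left_id (cd_zero k) (cd_add k).
Proof. by elim: k => [|k' IH] x /=; [exact: add0r | rewrite !IH; case: x]. Qed.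

Lemma cd_addr0 k : right_id (cd_zero k) (cd_add k).
Proof. by move=> x; rewrite cd_addC cd_add0r. Qed.

Lemma cd_addrN k (x : CD k) : cd_add k x (cd_opp k x) = cd_zero k.
Proof. by elim: k x => [|k' IH] x /=; [exact: addrN | rewrite !IH]. Qed.

Lemma cd_oppE k (x : CD k) : cd_opp k x = cd_scal k (-1)%R x.
Proof. by elim: k x => [|k' IH] x /=; [rewrite RmultE mulN1r | rewrite -!IH]. Qed.

Lemma cd_oppK k : involutive (cd_opp k).
Proof. by elim: k => [|k' IH] x /=; [exact: opprK | rewrite !IH; case: x]. Qed.

Lemma cd_oppD k : {morph cd_opp k : x y / cd_add k x y}.
Proof. by elim: k => [|k' IH] x y /=; [exact: opprD | rewrite !IH]. Qed.

Lemma cd_opp0 k : cd_opp k (cd_zero k) = cd_zero k.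
Proof. by elim: k => [|k' IH] /=; [exact: oppr0 | rewrite IH]. Qed.

Lemma cd_addr_eq0 k (x y : CD k) : cd_add k x y = cd_zero k -> y = cd_opp k x.
Proof.
by move=> xy0; rewrite -[y]cd_add0r -(cd_addrN x) cd_addC cd_addA (cd_addC y) xy0 cd_add0r.
Qed.

Lemma cd_scalDr k r : {morph cd_scal k r : x y / cd_add k x y}.
Proof. by elim: k => [|k' IH] x y /=; [exact: mulrDr | rewrite !IH]. Qed.

Lemma cd_scalDl k (x : CD k) r s :
  cd_scal k (r + s)%R x = cd_add k (cd_scal k r x) (cd_scal k s x).
Proof. by elim: k x => [|k' IH] x /=; [exact: mulrDl | rewrite !IH]. Qed.

Lemma cd_scalA k r s (x : CD k) : cd_scal k r (cd_scal k s x) = cd_scal k (r * s)%R x.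
Proof. by elim: k x => [|k' IH] x /=; [exact: mulrA | rewrite !IH]. Qed.

Lemma cd_scal0 k (x : CD k) : cd_scal k 0 x = cd_zero k.
Proof. by elim: k x => [|k' IH] x /=; [exact: mul0r | rewrite !IH]. Qed.

Lemma cd_scalr0 k r : cd_scal k r (cd_zero k) = cd_zero k.
Proof. by elim: k => [|k' IH] /=; [exact: mulr0 | rewrite IH]. Qed.

Lemma cd_scalN k r (x : CD k) : cd_scal k r (cd_opp k x) = cd_opp k (cd_scal k r x).
Proof. by rewrite !cd_oppE !cd_scalA mulrC. Qed.

Lemma cd_real0 k : cd_real k 0 = cd_zero k.
Proof. by elim: k => [|k' IH] /=; rewrite ?IH. Qed.

Lemma cd_realD k r s : cd_add k (cd_real k r) (cd_real k s) = cd_real k (r + s)%R.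
Proof. by elim: k => [|k' IH] /=; [exact: RplusE | rewrite IH cd_add0r]. Qed.

Lemma cd_realN k r : cd_opp k (cd_real k r) = cd_real k (- r)%R.
Proof. by elim: k => [|k' IH] /=; [exact: RoppE | rewrite IH cd_opp0]. Qed.

Lemma cd_scal_real k r s : cd_scal k r (cd_real k s) = cd_real k (r * s)%R.
Proof. by elim: k => [|k' IH] /=; [exact: RmultE | rewrite IH cd_scalr0]. Qed.

Lemma cd_re_real k r : cd_re k (cd_real k r) = r.
Proof. by elim: k. Qed.

Lemma cd_real_inj k : injective (cd_real k).
Proof. by move=> r s /(congr1 (cd_re k)); rewrite !cd_re_real. Qed.

Lemma cd_conjD k : {morph cd_conj k : x y / cd_add k x y}.
Proof. by elim: k => [|k' IH] x y //=; rewrite IH cd_oppD. Qed.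

Lemma cd_conjZ k r (x : CD k) : cd_conj k (cd_scal k r x) = cd_scal k r (cd_conj k x).
Proof. by elim: k x => [|k' IH] x //=; rewrite IH cd_scalN. Qed.

Lemma cd_conj_real k r : cd_conj k (cd_real k r) = cd_real k r.
Proof. by elim: k => [|k' IH] //=; rewrite IH cd_opp0. Qed.

Lemma cd_conj0 k : cd_conj k (cd_zero k) = cd_zero k.
Proof. by rewrite -cd_real0 cd_conj_real. Qed.

(* The product on [CD k.+1] multiplies in [CD k] on both sides, so laws for
   left and right multiplication are proved by a joint induction. *)
Lemma cd_mulD k :
  left_distributive (cd_mul k) (cd_add k) /\ right_distributive (cd_mul k) (cd_add k).
Proof.
elim: k => [|k [IHl IHr]]; first exact: (conj (@mulrDl R) (@mulrDr R)).
by split=> [[a1 b1] [a2 b2] [c d] | [c d] [a1 b1] [a2 b2]] /=;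
  congr (_, _); rewrite ?cd_conjD ?IHl ?IHr ?cd_oppD cd_addACA.
Qed.

Lemma cd_mulDl k : left_distributive (cd_mul k) (cd_add k).
Proof. exact: (cd_mulD k).1. Qed.

Lemma cd_mulDr k : right_distributive (cd_mul k) (cd_add k).
Proof. exact: (cd_mulD k).2. Qed.

Lemma cd_mulZ k r :
  (forall x y, cd_mul k (cd_scal k r x) y = cd_scal k r (cd_mul k x y)) /\
  (forall x y, cd_mul k x (cd_scal k r y) = cd_scal k r (cd_mul k x y)).
Proof.
elim: k => [|k [IHl IHr]].
  by split=> x y /=; [exact/esym/mulrA | exact: mulrCA].
by split=> -[a b] [c d] /=; congr (_, _); rewrite ?cd_conjZ ?IHl ?IHr ?cd_scalDr ?cd_scalN.
Qed.

Lemma cd_mulZl k r (x y : CD k) : cd_mul k (cd_scal k r x) y = cd_scal k r (cd_mul k x y).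
Proof. exact: (cd_mulZ k r).1. Qed.

Lemma cd_mulZr k r (x y : CD k) : cd_mul k x (cd_scal k r y) = cd_scal k r (cd_mul k x y).
Proof. exact: (cd_mulZ k r).2. Qed.

Lemma cd_mulNl k (x y : CD k) : cd_mul k (cd_opp k x) y = cd_opp k (cd_mul k x y).
Proof. by rewrite !cd_oppE cd_mulZl. Qed.

Lemma cd_mulNr k (x y : CD k) : cd_mul k x (cd_opp k y) = cd_opp k (cd_mul k x y).
Proof. by rewrite !cd_oppE cd_mulZr. Qed.

Lemma cd_mul0l k (x : CD k) : cd_mul k (cd_zero k) x = cd_zero k.
Proof. by rewrite -(cd_scal0 (cd_zero k)) cd_mulZl !cd_scal0. Qed.

Lemma cd_mul0r k (x : CD k) : cd_mul k x (cd_zero k) = cd_zero k.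
Proof. by rewrite -(cd_scal0 (cd_zero k)) cd_mulZr !cd_scal0. Qed.

Lemma cd_mul_real k r :
  (forall x, cd_mul k (cd_real k r) x = cd_scal k r x) /\
  (forall x, cd_mul k x (cd_real k r) = cd_scal k r x).
Proof.
elim: k => [|k [IHl IHr]]; first by split=> x //=; exact: mulrC.
split=> -[c d] /=; congr (_, _);
  by rewrite ?cd_conj_real ?cd_conj0 ?IHl ?IHr ?cd_mul0l ?cd_mul0r ?cd_opp0 ?cd_addr0 ?cd_add0r.
Qed.

Lemma cd_mul_reall k r (x : CD k) : cd_mul k (cd_real k r) x = cd_scal k r x.
Proof. exact: (cd_mul_real k r).1. Qed.

Lemma cd_mul_realr k r (x : CD k) : cd_mul k x (cd_real k r) = cd_scal k r x.
Proof. exact: (cd_mul_real k r).2. Qed.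

Fixpoint cd_inner k : CD k -> CD k -> R :=
  match k return CD k -> CD k -> R with
  | O => fun x y : R => x * y
  | S k' => fun x y => cd_inner x.1 y.1 + cd_inner x.2 y.2
  end.

Lemma cd_innerC k (x y : CD k) : cd_inner x y = cd_inner y x.
Proof. by elim: k x y => [|k IH] x y /=; [exact: mulrC | rewrite IH [cd_inner x.2 _]IH]. Qed.

Lemma cd_innerDl k (x y z : CD k) :
  cd_inner (cd_add k x y) z = cd_inner x z + cd_inner y z.
Proof. by elim: k x y z => [|k IH] x y z /=; [exact: mulrDl | rewrite !IH addrACA]. Qed.

Lemma cd_innerZl k r (x y : CD k) : cd_inner (cd_scal k r x) y = r * cd_inner x y.
Proof. by elim: k x y => [|k IH] x y /=; [exact/esym/mulrA | rewrite !IH mulrDr]. Qed.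

Lemma cd_innerDr k (x y z : CD k) :
  cd_inner z (cd_add k x y) = cd_inner z x + cd_inner z y.
Proof. by rewrite cd_innerC cd_innerDl !(cd_innerC z). Qed.

Lemma cd_innerZr k r (x y : CD k) : cd_inner y (cd_scal k r x) = r * cd_inner y x.
Proof. by rewrite cd_innerC cd_innerZl cd_innerC. Qed.

Lemma cd_inner_realr k r (x : CD k) : cd_inner x (cd_real k r) = r * cd_re k x.
Proof.
elim: k r x => [|k IH] r x /=; first exact: mulrC.
by rewrite IH -cd_real0 IH mul0r addr0.
Qed.

Lemma cd_inner_ge0 k (x : CD k) : 0 <= cd_inner x x.
Proof. by elim: k x => [|k IH] x /=; [exact: sqr_ge0 | rewrite addr_ge0]. Qed.

Lemma cd_inner_selfD k (x y : CD k) :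
  cd_inner (cd_add k x y) (cd_add k x y) = cd_inner x x + cd_inner y y + 2 * cd_inner x y.
Proof. rewrite !cd_innerDl !cd_innerDr (cd_innerC y x); ring. Qed.

Lemma cd_normE k (x : CD k) : cd_n k x = cd_real k (cd_inner x x).
Proof.
rewrite /cd_n; elim: k x => [|k IH] x; first exact: erefl.
by case: x => a b /=; rewrite IH cd_mulNr IH cd_oppK cd_realD cd_mulNl cd_addrN.
Qed.

Lemma cd_re_norm k (x : CD k) : cd_re k (cd_n k x) = cd_inner x x.
Proof. by rewrite cd_normE cd_re_real. Qed.

Lemma cd_absE k (x : CD k) : cd_abs k x = Num.sqrt (cd_inner x x).
Proof. by rewrite /cd_abs cd_re_norm RsqrtE. Qed.

Lemma cd_dotE k (x y : CD k) : cd_dot k x y = cd_inner x y.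
Proof.
by rewrite /cd_dot !cd_re_norm cd_inner_selfD !RminusE RdivE IZRposE INRE /=; field.
Qed.

Lemma cd_trE k (x : CD k) : cd_tr k x = cd_real k (2 * cd_re k x)%R.
Proof.
rewrite /cd_tr; elim: k x => [|k IH] x; first by rewrite /= RplusE mulr_natl mulr2n.
by case: x => a b /=; rewrite IH cd_addrN.
Qed.

(** * Imaginary units and the complex line [C_I] *)

Record imag_unit_spec k (I : CD k) : Prop := ImagUnitSpec {
  imag_re : cd_re k I = 0;
  imag_norm : cd_inner I I = 1 }.

Lemma imag_unitP k (I : CD k) : imag_unit k I <-> imag_unit_spec I.
Proof.
split=> [[trI nI] | [reI nI]]; last by split; rewrite ?cd_trE ?cd_normE ?reI ?nI ?mulr0 ?cd_real0.
split; last by move: nI; rewrite cd_normE => /cd_real_inj.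
move: trI; rewrite cd_trE -cd_real0 => /cd_real_inj/eqP.
by rewrite mulf_eq0 pnatr_eq0 => /eqP.
Qed.

Lemma imag_sqr k (I : CD k) : imag_unit_spec I -> cd_mul k I I = cd_real k (-1)%R.
Proof.
move=> /imag_unitP[trI nI]; have conjI : cd_conj k I = cd_opp k I by apply: cd_addr_eq0.
by rewrite -[LHS]cd_oppK -cd_mulNl -conjI -/(cd_n k I) nI cd_realN.
Qed.

Section ComplexLine.
Variables (k : nat) (I : CD k).

Definition embC (w : R[i]) : CD k := cd_add k (cd_real k (Re w)) (cd_scal k (Im w) I).

Definition coordC (x : CD k) : R[i] := cd_inner x (cd_real k 1) +i* cd_inner x I.

Lemma in_CIP z : in_CI k I z <-> exists w, z = embC w.
Proof. by split=> [[a [b ->]] | [[a b] ->]]; [exists (a +i* b) | exists a, b]. Qed.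

Lemma pi_IE x : pi_I k I x = embC (coordC x).
Proof. by rewrite /pi_I !cd_dotE. Qed.

Lemma embCD w v : embC (w + v) = cd_add k (embC w) (embC v).
Proof. by case: w v => [a b] [c d]; rewrite /embC /= -cd_realD cd_scalDl cd_addACA. Qed.

Lemma embCZ r w : embC (r%:C * w) = cd_scal k r (embC w).
Proof.
case: w => a b; rewrite /embC cd_scalDr cd_scal_real cd_scalA /=.
by congr (cd_add _ (cd_real _ _) (cd_scal _ _ _)); ring.
Qed.

Lemma embC0 : embC 0 = cd_zero k.
Proof. by rewrite /embC /= cd_scal0 cd_addr0 cd_real0. Qed.

Lemma embC1 : embC 1 = cd_real k 1.
Proof. by rewrite /embC /= cd_scal0 cd_addr0. Qed.

Lemma cd_inner_embC x w :
  cd_inner x (embC w) = Re w * cd_inner x (cd_real k 1) + Im w * cd_inner x I.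
Proof. by rewrite cd_innerDr cd_innerZr !cd_inner_realr mul1r. Qed.

Hypothesis HI : imag_unit_spec I.

Lemma embCM w v : embC (w * v) = cd_mul k (embC w) (embC v).
Proof.
have mulI u : cd_mul k I (embC u) = embC ('i * u).
  case: u => c d; rewrite /embC cd_mulDr cd_mul_realr cd_mulZr (imag_sqr HI).
  rewrite cd_scal_real cd_addC /=.
  by congr (cd_add _ (cd_real _ _) (cd_scal _ _ _)); ring.
have -> : w * v = (Re w)%:C * v + (Im w)%:C * ('i * v).
  by case: w v => [a b] [c d]; apply/eqP; rewrite eq_complex /=; apply/andP; split; apply/eqP; ring.
by rewrite embCD !embCZ -mulI -cd_mulZl -cd_mul_reall -cd_mulDl.
Qed.

Lemma embCX w m : cd_pow k (embC w) m = embC (w ^+ m).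
Proof. by elim: m => [|m IH] /=; rewrite ?embC1 // IH -embCM exprSr. Qed.

Lemma coordCK : cancel embC coordC.
Proof.
move=> [a b]; rewrite /coordC !(cd_innerC (embC _)) !cd_inner_embC (imag_norm HI).
rewrite (cd_innerC _ I) !cd_inner_realr cd_re_real (imag_re HI) /=.
by rewrite R1E; congr (_ +i* _); ring.
Qed.

Lemma embC_inj : injective embC.
Proof. exact: can_inj coordCK. Qed.

Lemma coordC1 : coordC (cd_real k 1) = 1.
Proof. by rewrite -embC1 coordCK. Qed.

Lemma cd_inner_self_embC w : cd_inner (embC w) (embC w) = Re w ^+ 2 + Im w ^+ 2.
Proof.
case: w => a b; rewrite cd_inner_embC.
by have [-> ->] := coordCK (a +i* b); rewrite /= !expr2.
Qed.

Lemma cd_abs_embC w : cd_abs k (embC w) = normc w.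
Proof. by rewrite cd_absE cd_inner_self_embC; case: w. Qed.

Lemma normc_coordC_le x : normc (coordC x) <= cd_abs k x.
Proof.
(* Bessel: expand |x - pi_I x|^2 >= 0. *)
have := cd_inner_ge0 (cd_add k x (cd_opp k (embC (coordC x)))).
rewrite cd_inner_selfD cd_oppE cd_innerZl !cd_innerZr cd_inner_self_embC cd_inner_embC /=.
rewrite cd_absE ler_sqrt ?cd_inner_ge0 //; nra.
Qed.

End ComplexLine.

(** * [f_I] as a complex polynomial *)

Lemma eval_fI_from_cat k (I : CD k) c1 c2 z i :
  eval_fI_from k I (c1 ++ c2)%list z i =
  cd_add k (eval_fI_from k I c1 z i) (eval_fI_from k I c2 z (i + length c1)%N).
Proof.
elim: c1 i => [|x c IH] i /=; first by rewrite cd_add0r addn0.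
by rewrite IH cd_addA addnS.
Qed.

Lemma eval_fI_from_map_seq k (I : CD k) (a : nat -> CD k) (s m : nat) w i :
  imag_unit_spec I ->
  eval_fI_from k I (List.map a (List.seq s m)) (embC I w) i =
  embC I (\sum_(j < m) coordC I (a (s + j)%N) * w ^+ (i + j)).
Proof.
move=> HI; elim: m s i => [|m IH] s i /=; first by rewrite big_ord0 embC0.
rewrite big_ord_recl IH pi_IE embCX // -(embCM HI) -embCD !addn0; congr (embC I (_ + _)).
by apply: eq_bigr => j _; rewrite /bump /= !addSnnS.
Qed.

Section MonicPolynomial.
Variables (k n : nat) (a : nat -> CD k).

Definition fI_poly (I : CD k) : {poly R[i]} := 'X^n + \poly_(j < n) coordC I (a j).

Lemma horner_fI_poly I w : (fI_poly I).[w] = w ^+ n + \sum_(j < n) coordC I (a j) * w ^+ j.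
Proof. by rewrite hornerD hornerXn horner_poly. Qed.

Lemma size_fI_poly I : size (fI_poly I) = n.+1.
Proof. by rewrite size_polyDl size_polyXn // ltnS size_poly. Qed.

Lemma fI_poly_monic I : fI_poly I \is monic.
Proof. by rewrite monicE lead_coefDl ?lead_coefXn // size_polyXn ltnS size_poly. Qed.

Lemma eval_fI_monic I w : imag_unit_spec I ->
  eval_fI k I (monic_poly k n a) (embC I w) = embC I (fI_poly I).[w].
Proof.
move=> HI; rewrite /eval_fI /monic_poly eval_fI_from_cat eval_fI_from_map_seq //=.
rewrite length_map length_seq pi_IE coordC1 // embCX // -(embCM HI) mul1r cd_addr0.
by rewrite -embCD horner_fI_poly addrC add0n.
Qed.

Lemma root_fIP I z : imag_unit_spec I ->
  (in_CI k I z /\ eval_fI k I (monic_poly k n a) z = cd_zero k) <->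
  exists2 w, z = embC I w & root (fI_poly I) w.
Proof.
move=> HI; rewrite in_CIP; split=> [[[w ->]] | [w -> /eqP rootw]]; last first.
  by split; [exists w | rewrite eval_fI_monic // rootw embC0].
by rewrite eval_fI_monic // -(embC0 I) => /embC_inj rootw; exists w; rewrite ?rootE ?rootw.
Qed.

Lemma fI_nonconstant_monic I : imag_unit_spec I -> (0 < n)%N ->
  fI_nonconstant k I (monic_poly k n a).
Proof.
move=> HI n_gt0; exists n; rewrite /monic_poly length_app length_map length_seq /=.
split; first exact/ssrnat.leP.
split; first by rewrite Nat.add_1_r; exact: Nat.lt_succ_diag_r.
rewrite app_nth2 length_map length_seq ?Nat.sub_diag; last exact: le_n.
rewrite /= pi_IE coordC1 // embC1 -cd_real0 => /cd_real_inj /eqP.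
by rewrite oner_eq0.
Qed.

Lemma fI_root_dominated I w : imag_unit_spec I -> root (fI_poly I) w ->
  normc w ^+ n <= \sum_(j < n) cd_abs k (a j) * normc w ^+ j.
Proof.
move=> HI; rewrite rootE horner_fI_poly addr_eq0 => /eqP wn.
rewrite -normcX wn normcN; apply: le_trans; first exact: normc_sum.
apply: ler_sum => j _; rewrite normcM normcX.
by apply: ler_wpM2r; [exact/exprn_ge0/normc_ge0 | exact: normc_coordC_le].
Qed.

End MonicPolynomial.

Lemma radius1E k n (a : nat -> CD k) :
  radius1 k n a = Num.sqrt (1 + \sum_(j < n) cd_abs k (a j) ^+ 2).
Proof.
rewrite /radius1 foldr_map_seq add0n big_mkord RsqrtE RplusE.
by congr (Num.sqrt (1 + _)); apply: eq_bigr => j _; rewrite RpowE.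
Qed.

Lemma radius2E k n (a : nat -> CD k) :
  radius2 k n a = 1 + \big[Num.max/0]_(j < n) cd_abs k (a j).
Proof.
rewrite /radius2; have -> : Rmax = Num.max by apply/funext => x; apply/funext => y; exact: RmaxE.
by rewrite foldr_map_seq add0n big_mkord RplusE.
Qed.

Lemma radius3E k n (a : nat -> CD k) :
  radius3 k n a = Num.max 1 (\sum_(j < n) cd_abs k (a j)).
Proof. by rewrite /radius3 foldr_map_seq add0n big_mkord RmaxE. Qed.

Lemma fI_root_bounds k n (a : nat -> CD k) I w :
  imag_unit_spec I -> root (fI_poly n a I) w ->
  [/\ normc w < radius1 k n a, normc w < radius2 k n a & normc w <= radius3 k n a].
Proof.
move=> HI rootw; have dom := fI_root_dominated HI rootw.
have abs_ge0 j : 0 <= cd_abs k (a j) by rewrite cd_absE sqrtr_ge0.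
rewrite radius1E radius2E radius3E; split.
- have lt_sqr := dominated_sqr_lt_1_add_sum_sqr (A := fun j => cd_abs k (a j)) (normc_ge0 w) dom.
  rewrite -[normc w]ger0_norm ?normc_ge0 // -sqrtr_sqr ltr_sqrt //.
  by apply: le_lt_trans lt_sqr; exact: sqr_ge0.
- exact: (dominated_lt_1_add_max (A := fun j => cd_abs k (a j)) (normc_ge0 w) dom).
- exact: (dominated_le_max1_sum (A := fun j => cd_abs k (a j)) abs_ge0 dom).
Qed.

Lemma cd_comb_embC k (I : CD k) (l : seq (R * R[i])) :
  fold_right (fun p acc => cd_add k (cd_scal k p.1 p.2) acc) (cd_zero k)
    (List.map (fun q => (q.1, embC I q.2)) l) =
  embC I (\sum_(q <- l) q.1%:C * q.2).
Proof.
elim: l => [|q l IH] /=; first by rewrite big_nil embC0.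
by rewrite big_cons embCD embCZ IH.
Qed.

Section MonicSnail.
Variables (k n : nat) (a : nat -> CD k).
Hypothesis n_gt0 : (0 < n)%N.

Definition weighted_roots (I : CD k) (l : seq (R * R[i])) : Prop :=
  [/\ forall q, q \in l -> 0 <= q.1, \sum_(q <- l) q.1 = 1
    & forall q, q \in l -> root (fI_poly n a I) q.2].

Lemma snail_monicP x :
  snail k (monic_poly k n a) x <->
  exists2 I, imag_unit_spec I &
    exists2 l, weighted_roots I l & x = embC I (\sum_(q <- l) q.1%:C * q.2).
Proof.
split=> [[I [/imag_unitP HI [[_ [L [L_hull [L_sum ->]]]] | [nonconst _]]]] |]; last first.
- move=> [I HI [l [l_ge0 l_sum l_root] ->]]; exists I; split; first exact/imag_unitP.
  left; split; first exact: fI_nonconstant_monic.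
  exists (List.map (fun q => (q.1, embC I q.2)) l); split; [|split].
  + apply/Forall_forall => _ /in_map_iff[q [<- /In_mem lq]]; split; first exact/RleP/l_ge0.
    by apply/root_fIP => //; exists q.2; rewrite ?l_root.
  + by rewrite List.map_map foldr_Rplus_map.
  + by rewrite cd_comb_embC.
- by case: nonconst; apply: fI_nonconstant_monic.
have L_roots q : List.In q L -> 0 <= q.1 /\ exists2 w, q.2 = embC I w & root (fI_poly n a I) w.
  move=> /((Forall_forall _ _).1 L_hull)[/RleP q_ge0 in_CI_root].
  by split=> //; apply/root_fIP.
pose l := List.map (fun q => (q.1, coordC I q.2)) L.
have -> : L = List.map (fun q => (q.1, embC I q.2)) l.
  rewrite List.map_map -[LHS]List.map_id; apply: List.map_ext_in => -[r z] /L_roots[_ [w /= -> _]].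
  by rewrite coordCK.
exists I => //; exists l; last by rewrite cd_comb_embC.
split.
- by move=> _ /In_mem/in_map_iff[q [<- /L_roots[]]].
- by rewrite -foldr_Rplus_map List.map_map.
- move=> _ /In_mem/in_map_iff[q [<- /L_roots[_ [w /= -> rootw]]]].
  by rewrite coordCK.
Qed.

Lemma snail_monic_bounds x : snail k (monic_poly k n a) x ->
  [/\ cd_abs k x < radius1 k n a, cd_abs k x < radius2 k n a & cd_abs k x <= radius3 k n a].
Proof.
move=> /snail_monicP[I HI [l [l_ge0 l_sum l_root] ->]].
rewrite cd_abs_embC //; have comb := normc_convex_comb l_ge0.
have root_bounds q : q \in l -> _ := fun lq => fI_root_bounds HI (l_root q lq).
split.
- by apply: le_lt_trans comb _; apply: convex_comb_lt => // q /root_bounds[].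
- by apply: le_lt_trans comb _; apply: convex_comb_lt => // q /root_bounds[].
- by apply: le_trans comb _; apply: convex_comb_le => // q /root_bounds[].
Qed.

Lemma weighted_roots_regroup I l : weighted_roots I l ->
  exists mu : 'I_n -> R, exists2 v : 'I_n -> R[i],
    [/\ forall j, 0 <= mu j, \sum_(j < n) mu j = 1 & forall j, root (fI_poly n a I) (v j)]
    & \sum_(j < n) (mu j)%:C * v j = \sum_(q <- l) q.1%:C * q.2.
Proof.
(* Merge the weights of equal roots, indexed by their position in the list of
   all n roots of [fI_poly I]. *)
move=> [l_ge0 l_sum l_root].
have [rs size_rs rootsE] := monic_closed_roots (fI_poly_monic n a I).
rewrite size_fI_poly /= in size_rs.
have l_rs : {in l, forall q, q.2 \in rs} by move=> q lq; rewrite -rootsE l_root.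
exists (fun j => \sum_(q <- l | j == index q.2 rs :> nat) q.1), (fun j => nth 0 rs j).
  split=> [j | | j]; last by rewrite rootsE mem_nth // size_rs.
    by rewrite big_seq_cond sumr_ge0 // => q /andP[/l_ge0].
  by rewrite -l_sum -(sum_by_index 0 (fun q _ => q.1) l_rs) size_rs.
rewrite -(sum_by_index 0 (fun q w => q.1%:C * w) l_rs) size_rs.
by apply: eq_bigr => j _; rewrite rmorph_sum big_distrl.
Qed.

End MonicSnail.

(** * Coordinates and compactness in [CD k] *)

Fixpoint dim k : nat := if k is k'.+1 then (dim k' + dim k')%N else 1%N.

Fixpoint vec k : CD k -> 'rV[R]_(dim k) :=
  match k return CD k -> 'rV[R]_(dim k) with
  | O => fun x => const_mx x
  | S k' => fun x => row_mx (vec x.1) (vec x.2)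
  end.

Fixpoint unvec k : 'rV[R]_(dim k) -> CD k :=
  match k return 'rV[R]_(dim k) -> CD k with
  | O => fun v => v ord0 ord0
  | S k' => fun v => (unvec (lsubmx v), unvec (rsubmx v))
  end.

Lemma vecK k : cancel (@vec k) (@unvec k).
Proof.
elim: k => [|k IH] x /=; first by rewrite mxE.
by rewrite row_mxKl row_mxKr !IH; case: x.
Qed.

Lemma unvecK k : cancel (@unvec k) (@vec k).
Proof.
elim: k => [|k IH] v /=; first by apply/matrixP => i j; rewrite !ord1 mxE.
by rewrite !IH hsubmxK.
Qed.

Lemma vec_add k (x y : CD k) : vec (cd_add k x y) = vec x + vec y.
Proof.
elim: k x y => [|k IH] x y /=; first by apply/matrixP => i j; rewrite !mxE.
by rewrite !IH add_row_mx.
Qed.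

Lemma vec_scal k r (x : CD k) : vec (cd_scal k r x) = r *: vec x.
Proof.
elim: k x => [|k IH] x /=; first by apply/matrixP => i j; rewrite !mxE.
by rewrite !IH scale_row_mx.
Qed.

Lemma cd_inner_vec k (x y : CD k) :
  cd_inner x y = \sum_(i < dim k) vec x ord0 i * vec y ord0 i.
Proof.
elim: k x y => [|k IH] x y /=; first by rewrite big_ord1 !mxE.
rewrite big_split_ord /= !IH; congr (_ + _); apply: eq_bigr => i _.
  by rewrite !row_mxEl.
by rewrite !row_mxEr.
Qed.

Lemma cd_abs_sub_vec k (x y : CD k) :
  cd_abs k (cd_sub k y x) = Num.sqrt (\sum_(i < dim k) (vec y ord0 i - vec x ord0 i) ^+ 2).
Proof.
rewrite cd_absE cd_inner_vec /cd_sub vec_add cd_oppE vec_scal scaleN1r.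
by congr Num.sqrt; apply: eq_bigr => i _; rewrite !mxE expr2.
Qed.

Lemma cd_open_preimage k (T : topologicalType) (f : T -> CD k) (U : CD k -> Prop) :
  (forall i, continuous (fun p => vec (f p) ord0 i)) -> cd_open k U -> open (f @^-1` U).
Proof.
move=> cf Uo; rewrite openE => p /Uo[e [/RltP e_gt0 ballU]].
pose G p' := \sum_(i < dim k) (vec (f p') ord0 i - vec (f p) ord0 i) ^+ 2.
have cG : continuous G.
  apply: continuousR_sum => i; under eq_fun do rewrite expr2.
  by apply: continuousR_M; apply: continuousR_D; rewrite ?cf //; apply/continuousR_N/cst_continuous.
have Gp0 : G p = 0 by rewrite /G big1 // => i _; rewrite subrr expr0n.
have : G p < e ^+ 2 by rewrite Gp0 exprn_gt0.
move=> /(@cvgr_lt R _ _ (nbhs_filter p) G (G p) (cG p)).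
apply: filterS => p' Gp'; apply: ballU; apply/RltP.
by rewrite cd_abs_sub_vec -[e]ger0_norm ?ltW // -sqrtr_sqr ltr_sqrt ?exprn_gt0.
Qed.

Lemma cd_compact_image k (T : ptopologicalType) (K : set T) (f : T -> CD k) (S : CD k -> Prop) :
  compact K -> (forall U, cd_open k U -> open (f @^-1` U)) ->
  (forall p, K p -> S (f p)) -> (forall x, S x -> exists2 p, K p & f p = x) ->
  cd_compact k S.
Proof.
move=> K_compact f_cont KS SK J U U_open S_cover.
have [[x0 Sx0] | S0] := pselect (exists x, S x); last first.
  by exists nil => x Sx; case: S0; exists x.
have [j0 _] := S_cover x0 Sx0.
have pick_cover p : exists j, K p -> U j (f p).
  have [/KS/S_cover[j Ujp] | nKp] := pselect (K p); last by exists j0.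
  by exists j.
pose j_of p := projT1 (cid (pick_cover p)).
have j_ofP p : K p -> U (j_of p) (f p) := projT2 (cid (pick_cover p)).
move: K_compact; rewrite compact_cover => K_compact.
have [D _ D_cover] := K_compact T K (fun p => f @^-1` U (j_of p))
  (fun p _ => f_cont _ (U_open _)) (fun p Kp => ex_intro2 _ _ p Kp (j_ofP p Kp)).
exists (List.map j_of (finmap.enum_fset D)) => x /SK[p Kp <-].
have [q Dq Uq] := D_cover p Kp.
by exists (j_of q); split=> //; apply/List.in_map/In_mem.
Qed.

Section SnailParametrization.
Variables (k n : nat) (a : nat -> CD k).
Hypothesis n_gt0 : (0 < n)%N.

(* A parameter lists the coordinates of an imaginary unit, n weights, and the
   real and imaginary parts of n roots. *)
Local Notation P := 'rV[R]_(dim k + (n + (n + n))).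
Local Notation rho := (radius3 k n a).

Definition par_unit (p : P) : CD k := unvec (lsubmx p).

Definition par_weight (p : P) (j : 'I_n) : R := p ord0 (rshift (dim k) (lshift (n + n) j)).

Definition par_root (p : P) (j : 'I_n) : R[i] :=
  p ord0 (rshift (dim k) (rshift n (lshift n j))) +i*
  p ord0 (rshift (dim k) (rshift n (rshift n j))).

Definition par_point (p : P) : CD k :=
  embC (par_unit p) (\sum_(j < n) (par_weight p j)%:C * par_root p j).

Definition par_box : set P := [set p | forall i, `[- rho, rho]%classic (p ord0 i)].

Definition par_constraints : set P :=
  [set p | cd_inner (par_unit p) (cd_real k 1) = 0] `&`
  [set p | cd_inner (par_unit p) (par_unit p) = 1] `&`
  [set p | forall j, 0 <= par_weight p j] `&`
  [set p | \sum_(j < n) par_weight p j = 1] `&`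
  [set p | forall j, Re (fI_poly n a (par_unit p)).[par_root p j] = 0] `&`
  [set p | forall j, Im (fI_poly n a (par_unit p)).[par_root p j] = 0].

Lemma vec_par_unit p i : vec (par_unit p) ord0 i = p ord0 (lshift _ i).
Proof. by rewrite /par_unit unvecK mxE. Qed.

Lemma continuous_inner_par_unit x : continuous (fun p => cd_inner x (par_unit p)).
Proof.
under eq_fun do rewrite cd_inner_vec.
apply: continuousR_sum => i; under eq_fun do rewrite vec_par_unit.
exact/continuousR_M/coord_continuous/cst_continuous.
Qed.

Lemma continuousC_par_root j : continuousC (par_root^~ j).
Proof. by split; exact: coord_continuous. Qed.

Lemma continuousC_horner j : continuousC (fun p => (fI_poly n a (par_unit p)).[par_root p j]).
Proof.
under eq_fun do rewrite horner_fI_poly.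
apply: continuousC_D; first exact/continuousC_X/continuousC_par_root.
apply: continuousC_sum => l; apply: continuousC_M; last exact/continuousC_X/continuousC_par_root.
by split; [exact: cst_continuous | exact: continuous_inner_par_unit].
Qed.

Lemma closed_par_constraints : closed par_constraints.
Proof.
repeat apply: closedI; try apply: closed_forall => j.
- apply: closed_continuous_eq; under eq_fun do rewrite cd_innerC.
  exact: continuous_inner_par_unit.
- apply: closed_continuous_eq; under eq_fun do rewrite cd_inner_vec.
  apply: continuousR_sum => i; under eq_fun do rewrite vec_par_unit.
  exact/continuousR_M/coord_continuous/coord_continuous.
- exact/closed_continuous_ge/coord_continuous.
- by apply/closed_continuous_eq/continuousR_sum => j; exact: coord_continuous.
- exact/closed_continuous_eq/(continuousC_horner j).1.
- exact/closed_continuous_eq/(continuousC_horner j).2.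
Qed.

Lemma compact_par_domain : compact (par_box `&` par_constraints).
Proof.
apply: compact_closedI closed_par_constraints.
exact: (@rV_compact R _ _ (fun=> @segment_compact R (- rho) rho)).
Qed.

Lemma vec_par_point p i : vec (par_point p) ord0 i =
  Re (\sum_(j < n) (par_weight p j)%:C * par_root p j) * vec (cd_real k 1) ord0 i +
  Im (\sum_(j < n) (par_weight p j)%:C * par_root p j) * p ord0 (lshift _ i).
Proof.
rewrite /par_point /embC -[X in cd_real k X]mulr1 -cd_scal_real !vec_add !vec_scal.
by rewrite !mxE vec_par_unit.
Qed.

Lemma continuous_par_point i : continuous (fun p => vec (par_point p) ord0 i).
Proof.
have [cRe cIm] : continuousC (fun p => \sum_(j < n) (par_weight p j)%:C * par_root p j).
  apply: continuousC_sum => j; apply: continuousC_M; last exact: continuousC_par_root.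
  exact/continuousC_real/coord_continuous.
under eq_fun do rewrite vec_par_point.
apply: continuousR_D; apply: continuousR_M => //; [exact: cst_continuous | exact: coord_continuous].
Qed.

Lemma par_point_snail p : par_constraints p -> snail k (monic_poly k n a) (par_point p).
Proof.
move=> /= [[[[[reI normI] w_ge0] w_sum] rootRe] rootIm].
have HI : imag_unit_spec (par_unit p).
  by split=> //; move: reI; rewrite mksetE cd_inner_realr R1E mul1r.
apply/(snail_monicP _ n_gt0); exists (par_unit p) => //.
exists [seq (par_weight p j, par_root p j) | j <- index_enum 'I_n]; last by rewrite big_map.
split=> [_ /mapP[j _ ->] | | _ /mapP[j _ ->]]; first exact: w_ge0.
  by rewrite big_map; exact: w_sum.
rewrite rootE.
by move: (rootRe j) (rootIm j); case: (_.[_]) => /= x y -> ->.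
Qed.

Section ParameterOf.
Variables (I : CD k) (mu : 'I_n -> R) (v : 'I_n -> R[i]).

Definition par_of : P :=
  row_mx (vec I) (row_mx (\row_j mu j) (row_mx (\row_j Re (v j)) (\row_j Im (v j)))).

Lemma par_unit_of : par_unit par_of = I.
Proof. by rewrite /par_unit row_mxKl vecK. Qed.

Lemma par_weight_of j : par_weight par_of j = mu j.
Proof. by rewrite /par_weight row_mxEr row_mxEl mxE. Qed.

Lemma par_root_of j : par_root par_of j = v j.
Proof. by rewrite /par_root !row_mxEr row_mxEl !mxE; case: (v j). Qed.

Hypotheses (HI : imag_unit_spec I) (mu_ge0 : forall j, 0 <= mu j).
Hypotheses (mu_sum : \sum_(j < n) mu j = 1) (v_root : forall j, root (fI_poly n a I) (v j)).

Lemma par_of_constraints : par_constraints par_of.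
Proof.
rewrite /par_constraints /setI /mkset /= par_unit_of.
split; [split; [split; [split; [split|]|]|]|].
- by rewrite cd_inner_realr (imag_re HI) mulr0.
- exact: imag_norm HI.
- by move=> j; rewrite par_weight_of.
- by under eq_bigr do rewrite par_weight_of.
- by move=> j; rewrite par_root_of (eqP (v_root j)).
- by move=> j; rewrite par_root_of (eqP (v_root j)).
Qed.

Lemma par_of_box : par_box par_of.
Proof.
have rho_ge1 : 1 <= rho by rewrite radius3E le_max lexx.
move=> i; rewrite /= in_itv /= -ler_norml /par_of; move: i.
pose Q (x : R) : Prop := `|x| <= rho.
apply: (row_mx_all (Q := Q)); [|apply: (row_mx_all (Q := Q)); [|apply: (row_mx_all (Q := Q))]].
all: move=> i; rewrite /Q ?mxE.
- apply: le_trans rho_ge1; rewrite -sqrtr_sqr -sqrtr1 ler_sqrt // -(imag_norm HI).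
  by rewrite cd_inner_vec (bigD1 i) //= expr2 lerDl sumr_ge0 // => j _; rewrite -expr2 sqr_ge0.
- rewrite ger0_norm ?mu_ge0 // (le_trans _ rho_ge1) // -mu_sum (bigD1 i) //= lerDl.
  exact: sumr_ge0.
- by apply: le_trans (norm_Re_le_normc _) _; case: (fI_root_bounds HI (v_root i)).
- by apply: le_trans (norm_Im_le_normc _) _; case: (fI_root_bounds HI (v_root i)).
Qed.

End ParameterOf.

Lemma snail_par_point x : snail k (monic_poly k n a) x ->
  exists2 p, (par_box `&` par_constraints) p & par_point p = x.
Proof.
move=> /(snail_monicP _ n_gt0)[I HI [l wl ->]].
have [mu [v [mu_ge0 mu_sum v_root] comb]] := weighted_roots_regroup wl.
exists (par_of I mu v); first by split; [exact: par_of_box | exact: par_of_constraints].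
rewrite /par_point par_unit_of.
by under eq_bigr do rewrite par_weight_of par_root_of; rewrite comb.
Qed.

Lemma snail_monic_compact : cd_compact k (snail k (monic_poly k n a)).
Proof.
apply: (cd_compact_image compact_par_domain).
- by move=> U; apply/cd_open_preimage/continuous_par_point.
- by move=> p [_]; exact: par_point_snail.
- exact: snail_par_point.
Qed.

End SnailParametrization.

End CayleyDicksonSnail.

Import CayleyDicksonSnail.

Theorem theorem4p10 (k n : nat) (a : nat -> CD k) :
  (1 <= n)%nat ->
  cd_compact k (snail k (monic_poly k n a)) /\
  (forall x, snail k (monic_poly k n a) x -> cd_abs k x < radius1 k n a) /\
  (forall x, snail k (monic_poly k n a) x -> cd_abs k x < radius2 k n a) /\
  (forall x, snail k (monic_poly k n a) x -> cd_abs k x <= radius3 k n a).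
Proof.
move=> /ssrnat.leP n_gt0; split; first exact: snail_monic_compact.
split; [|split] => x /(snail_monic_bounds n_gt0)[lt1 lt2 le3].
- exact/Rstruct.RltP.
- exact/Rstruct.RltP.
- exact/Rstruct.RleP.
Qed.
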